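(* Let $P$ be any school choice problem, where $S$ includes the null school $s_\emptyset$ and $n=|S|$. Let $i\in I$. If either (i) $i$ is assigned under $\mathrm{DA}(P)$ to his least preferred school in $S$ (the school of rank $n$ in $\succ_i$) and at least one school is under-demanded, or (ii) $\mathrm{DA}_i(P)=s_\emptyset$, then $i$ is unimprovable.
   Context: A school choice problem $P$ consists of a finite set of students $I$, a finite set of schools $S$ containing a null school $s_\emptyset$ with unlimited capacity (quota at least $|I|$), for each student $i$ a strict preference $\succ_i$ over all of $S$, and for each school $s$ a quota $q_s$ and a strict priority order $\triangleright_s$ over $I$. A matching $\mu:I\to S$ assigns at most $q_s$ students to each school $s$; a student with $\mu_i=s_\emptyset$ is unassigned. Matching $\mu$ weakly Pareto-dominates $\nu$ if every student weakly prefers $\mu_i$ to $\nu_i$; it Pareto-dominates $\nu$ if in addition some student strictly prefers $\mu_j$ to $\nu_j$; a matching is Pareto-efficient if no matching Pareto-dominates it. $\mathrm{DA}(P)$ is the matching produced by student-proposing deferred acceptance: in each round, every student not tentatively held applies to her most preferred school that has not yet rejected her; each school tentatively holds the highest-priority applicants up to its quota and rejects the rest; stop when a round has no new rejection. Let $\mathcal M(P)$ be the set of Pareto-efficient matchings that weakly Pareto-dominate $\mathrm{DA}(P)$. A student $i$ is unimprovable if $\mu_i=\mathrm{DA}_i(P)$ for every $\mu\in\mathcal M(P)$. A school $s$ is under-demanded if no student strictly prefers $s$ to her DA assignment (equivalently, $s$ rejects no student during DA). *)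

From mathcomp Require Import all_boot.
Set Implicit Arguments. Unset Strict Implicit. Unset Printing Implicit Defensive.

Record problem (I S : finType) := Problem {
  null_school : S;
  pref : I -> S -> S -> bool;           (* pref i a b  <->  a >_i b *)
  prio : S -> I -> I -> bool;           (* prio s j k  <->  j has higher priority than k at s *)
  quota : S -> nat;
  pref_irr : forall i a, ~~ pref i a a;
  pref_trans : forall i a b c, pref i a b -> pref i b c -> pref i a c;
  pref_total : forall i a b, a != b -> pref i a b || pref i b a;
  prio_irr : forall s j, ~~ prio s j j;
  prio_trans : forall s j k l, prio s j k -> prio s k l -> prio s j l;
  prio_total : forall s j k, j != k -> prio s j k || prio s k j;
  null_quota : #|I| <= quota null_school
}.

Section DA.
Variables (I S : finType) (P : problem I S).

(* A rejection state: (i, s) \in R means school s has rejected student i. *)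
Definition propose (R : {set I * S}) (i : I) : S :=
  odflt (null_school P)
    [pick s | ((i, s) \notin R) &&
              [forall t, ((i, t) \notin R) ==> (t != s) ==> pref P i s t]].

Definition rejected (R : {set I * S}) (i : I) : bool :=
  let s := propose R i in
  quota P s <= #|[set j | (propose R j == s) && prio P s j i]|.

Definition da_step (R : {set I * S}) : {set I * S} :=
  R :|: [set (i, propose R i) | i in [set i | rejected R i]].

(* Each round without a fixpoint adds a rejection, so after #|I| * #|S|
   rounds no new rejection occurs; this is where the algorithm stops. *)
Definition da_final : {set I * S} := iter (#|I| * #|S|) da_step set0.

Definition DA (i : I) : S := propose da_final i.

Definition is_matching (mu : I -> S) : Prop :=
  forall s, #|[set i | mu i == s]| <= quota P s.

Definition weakly_dominates (mu nu : I -> S) : Prop :=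
  forall i, mu i = nu i \/ pref P i (mu i) (nu i).

Definition dominates (mu nu : I -> S) : Prop :=
  weakly_dominates mu nu /\ exists j, pref P j (mu j) (nu j).

Definition pareto_efficient (mu : I -> S) : Prop :=
  is_matching mu /\ ~ exists nu, is_matching nu /\ dominates nu mu.

Definition in_M (mu : I -> S) : Prop :=
  pareto_efficient mu /\ weakly_dominates mu DA.

Definition unimprovable (i : I) : Prop :=
  forall mu, in_M mu -> mu i = DA i.

Definition under_demanded (s : S) : Prop :=
  forall j, ~ pref P j s (DA j).

Definition least_preferred (i : I) (s : S) : Prop :=
  forall t, t != s -> pref P i t s.

End DA.

From mathcomp Require Import all_boot zify.
Set Implicit Arguments. Unset Strict Implicit. Unset Printing Implicit Defensive.

(* Under student-proposing DA every school that some student strictly prefers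
   to her DA assignment is filled to its quota. Hence, if mu weakly dominates
   DA and i moves away from DA_i, counting seats at the schools that receive
   movers shows that the seat DA_i is taken in mu by some other mover, i.e.
   DA_i is envied. The null school is never envied (it could never be full
   with an envious student outside it), and under (i) an under-demanded school
   can only be DA_i itself; in both cases DA_i is not envied, so i cannot move. *)

Section StrictTotalOrder.
Variables (T : finType) (r : rel T).
Hypotheses (r_irr : irreflexive r) (r_trans : transitive r).
Hypothesis r_total : forall a b, a != b -> r a b || r b a.

Lemma r_asym a b : r a b -> r b a -> False.
Proof. by move=> rab rba; move: (r_irr a); rewrite (r_trans rab rba). Qed.

Lemma exists_rmax (A : pred T) a :
  a \in A -> exists2 x, x \in A & forall t, t \in A -> t != x -> r x t.
Proof.
move=> Aa.
have [x Ax xmax] := @arg_maxnP _ a (mem A) (fun x => #|[set t in A | r x t]|) Aa.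
exists x => // t At neq_tx.
case/orP: (r_total neq_tx) => // rtx; exfalso.
have := xmax t At; rewrite /geq /= leqNgt => /negP; apply.
apply: proper_card; apply/properP; split.
  by apply/subsetP => u; rewrite !inE => /andP[-> rxu]; exact: r_trans rtx rxu.
by exists x; rewrite !inE ?rtx ?r_irr ?andbF //= andbT.
Qed.

Definition rank (H : {set T}) l := #|[set m in H | r m l]|.

Lemma rank_lt (H : {set T}) l1 l2 : l1 \in H -> r l1 l2 -> rank H l1 < rank H l2.
Proof.
move=> Hl1 r12; apply: proper_card; apply/properP; split.
  by apply/subsetP => m; rewrite !inE => /andP[-> rm1]; exact: r_trans rm1 r12.
by exists l1; rewrite !inE ?Hl1 ?r12 ?r_irr ?andbF.
Qed.

Lemma card_rank_ge (H : {set T}) q :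
  #|[set l in H | q <= rank H l]| <= #|H| - q.
Proof.
rewrite cardE -(size_map (rank H)) -(size_iota q (#|H| - q)).
apply: uniq_leq_size.
  rewrite map_inj_in_uniq ?enum_uniq // => l1 l2.
  rewrite !mem_enum !inE => /andP[Hl1 _] /andP[Hl2 _] eq_rank.
  apply/eqP; apply: contraTT isT => neq12.
  by case/orP: (r_total neq12) => [/(rank_lt Hl1)|/(rank_lt Hl2)]; rewrite eq_rank ltnn.
move=> x /mapP[l]; rewrite mem_enum inE => /andP[Hl ge_q] ->.
have lt_H : rank H l < #|H|.
  apply: proper_card; apply/properP; split; first by apply/subsetP => m /setIdP[].
  by exists l; rewrite // inE r_irr andbF.
rewrite mem_iota ge_q /=; lia.
Qed.

End StrictTotalOrder.

Lemma card_preim_sum (A B : finType) (f : A -> B) (T : {set B}) :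
  #|[set a | f a \in T]| = \sum_(b in T) #|[set a | f a == b]|.
Proof.
rewrite -sum1_card (partition_big f (mem T)) /=; last by move=> a; rewrite inE.
apply: eq_bigr => b Tb; rewrite -sum1_card; apply: eq_bigl => a; rewrite !inE.
by case: (f a =P b) => [->|]; rewrite ?Tb ?andbF.
Qed.

Section DeferredAcceptance.
Variables (I S : finType) (P : problem I S).

Let pref_irreflexive i : irreflexive (pref P i).
Proof. by move=> a; apply: negbTE (pref_irr P i a). Qed.
Let pref_transitive i : transitive (pref P i).
Proof. by move=> b a c; apply: pref_trans. Qed.
Let prio_irreflexive s : irreflexive (prio P s).
Proof. by move=> j; apply: negbTE (prio_irr P s j). Qed.
Let prio_transitive s : transitive (prio P s).
Proof. by move=> k j l; apply: prio_trans. Qed.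

Lemma pref_asym i a b : pref P i a b -> pref P i b a -> False.
Proof. by move=> ab; apply: r_asym (@pref_irreflexive i) (@pref_transitive i) _ _ ab. Qed.

Lemma propose_max (R : {set I * S}) l t0 :
  (l, t0) \notin R ->
  (l, propose P R l) \notin R /\
  forall t, (l, t) \notin R -> t != propose P R l -> pref P l (propose P R l) t.
Proof.
move=> lt0; rewrite /propose; case: pickP => [x /andP[lx /forallP xmax] | none].
  by split=> // t lt neq_tx; have := xmax t; rewrite lt neq_tx.
have [x lx xmax] := exists_rmax (@pref_irreflexive l) (@pref_transitive l) (pref_total P l)
  (A := [pred t | (l, t) \notin R]) lt0.
move/negbT/negP: (none x); rewrite inE in lx; rewrite lx; case.
by apply/forallP => t; apply/implyP => lt; apply/implyP; exact: xmax.
Qed.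

Definition rivals (R : {set I * S}) s j :=
  [set l | (propose P R l == s) && prio P s l j].

Definition null_never_rejects (R : {set I * S}) :=
  forall l, (l, null_school P) \notin R.

Definition rejections_justified (R : {set I * S}) :=
  forall j s, (j, s) \in R -> quota P s <= #|rivals R s j|.

Lemma card_lt_null_quota (A : {set I}) l :
  l \notin A -> #|A| < quota P (null_school P).
Proof.
move=> Al; apply: leq_trans (null_quota P); rewrite -cardsT; apply: proper_card.
by apply/properP; split; [exact: subsetT | exists l].
Qed.

Lemma propose_step (R : {set I * S}) l :
  null_never_rejects R -> ~~ rejected P R l ->
  propose P (da_step P R) l = propose P R l.
Proof.
move=> null_ok not_rej.
have [lR Rmax] := propose_max (null_ok l).
have lR' : (l, propose P R l) \notin da_step P R.
  rewrite /da_step inE negb_or lR /=; apply/imsetP => -[k].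
  by rewrite inE => rej_k [eq_lk _]; rewrite eq_lk rej_k in not_rej.
have [lR'' R'max] := propose_max lR'.
apply/eqP; apply: contraT => neq.
have R_notin : (l, propose P (da_step P R) l) \notin R.
  by apply: contra lR''; rewrite /da_step inE => ->.
have R'pref : pref P l (propose P (da_step P R) l) (propose P R l).
  by apply: R'max; rewrite // eq_sym.
by case: (pref_asym R'pref (Rmax _ R_notin neq)).
Qed.

(* Rivals of rank below the quota are not rejected, so they keep applying to
   s; the others are at most #|rivals| - quota many. *)
Lemma rivals_step (R : {set I * S}) s j :
  null_never_rejects R ->
  quota P s <= #|rivals R s j| -> quota P s <= #|rivals (da_step P R) s j|.
Proof.
move=> null_ok; set H := rivals R s j; set q := quota P s => full.
pose rk := rank (prio P s) H.
have kept : [set l in H | rk l < q] \subset rivals (da_step P R) s j.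
  apply/subsetP => l; rewrite !inE => /andP[/andP[/eqP ls lj] low].
  have not_rej : ~~ rejected P R l.
    rewrite /rejected ls -ltnNge; apply: leq_ltn_trans low.
    apply: subset_leq_card; apply/subsetP => m; rewrite !inE => /andP[/eqP -> ml].
    by rewrite eqxx ml (prio_transitive ml lj).
  by rewrite propose_step // ls eqxx lj.
have dropped : #|[set l in H | q <= rk l]| <= #|H| - q.
  exact: (card_rank_ge (@prio_irreflexive s) (@prio_transitive s) (prio_total P s) H q).
have split_H : #|H| = #|[set l in H | rk l < q]| + #|[set l in H | q <= rk l]|.
  rewrite -(cardsID [set l | rk l < q] H); congr (_ + _); apply: eq_card => l.
    by rewrite !inE andbC.
  by rewrite !inE -leqNgt andbC.
have := subset_leq_card kept; lia.
Qed.

Lemma null_never_rejects_step (R : {set I * S}) :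
  null_never_rejects R -> null_never_rejects (da_step P R).
Proof.
move=> null_ok l; rewrite /da_step inE negb_or null_ok /=.
apply/imsetP => -[k]; rewrite inE => rej [eq_lk eq_null]; subst k.
move: rej; rewrite /rejected -eq_null leqNgt => /negP; apply.
by apply: card_lt_null_quota (l) _; rewrite inE prio_irreflexive andbF.
Qed.

Lemma da_iter_invariant n :
  null_never_rejects (iter n (da_step P) set0) /\
  rejections_justified (iter n (da_step P) set0).
Proof.
elim: n => [|n [null_ok just]] /=; first by split => [l|j s]; rewrite inE.
split; first exact: null_never_rejects_step.
move=> j s; rewrite /da_step inE => /orP[/just|/imsetP[k rej [-> ->]]].
  exact: rivals_step.
by apply: rivals_step; rewrite // inE in rej.
Qed.

Lemma envied_school_full j s :
  pref P j s (DA P j) -> quota P s <= #|[set l | DA P l == s]|.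
Proof.
move=> envy; have [_ just] := da_iter_invariant (#|I| * #|S|).
have js : (j, s) \in da_final P.
  apply: contraT => js.
  have [_ DAmax] := propose_max js.
  have [eq_s|neq_s] := eqVneq s (DA P j).
    by move: envy; rewrite eq_s pref_irreflexive.
  by case: (pref_asym envy (DAmax _ js neq_s)).
apply: leq_trans (just _ _ js) _; apply: subset_leq_card.
by apply/subsetP => l; rewrite !inE => /andP[-> _].
Qed.

Lemma null_school_under_demanded : under_demanded P (null_school P).
Proof.
move=> k envy; have := envied_school_full envy; rewrite leqNgt => /negP; apply.
apply: card_lt_null_quota (k) _; rewrite inE; apply: contraTN envy => /eqP <-.
by rewrite pref_irreflexive.
Qed.

(* The schools T receiving movers are full under DA, so they lose at least as
   many seats as movers arrive; as non-movers keep their school, every mover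
   must come from a school of T. *)
Lemma mover_seat_taken (mu : I -> S) j :
  is_matching P mu -> weakly_dominates P mu (DA P) -> mu j != DA P j ->
  exists k, mu k = DA P j /\ pref P k (DA P j) (DA P k).
Proof.
move=> matching dom moved_j.
have improves k : mu k != DA P k -> pref P k (mu k) (DA P k).
  by case: (dom k) => // ->; rewrite eqxx.
pose W := [set k | mu k != DA P k].
pose T := [set mu k | k in W].
pose A := [set k | mu k \in T].
pose B := [set k | DA P k \in T].
have le_AB : #|A| <= #|B|.
  rewrite /A /B !card_preim_sum; apply: leq_sum => s /imsetP[k].
  rewrite inE => /improves envy ->; exact: leq_trans (matching _) (envied_school_full envy).
have WA : A :&: W = W.
  by apply/setIidPr/subsetP => k Wk; rewrite inE imset_f.
have AB : A :\: W = B :\: W.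
  by apply/setP => k; rewrite !inE negbK; case: eqP => [->|].
have WB : B :&: W = W.
  apply/eqP; rewrite eqEcard subsetIr /=.
  by move: (cardsID W A) (cardsID W B) le_AB; rewrite WA AB; lia.
have : j \in B :&: W by rewrite WB inE.
rewrite !inE => /andP[/imsetP[k]]; rewrite inE => moved_k -> _.
by exists k; split => //; exact: improves.
Qed.

Lemma under_demanded_unimprovable i :
  under_demanded P (DA P i) -> unimprovable P i.
Proof.
move=> under mu [[matching _] dom].
apply/eqP; apply: contraT => moved.
have [k [_ envy]] := mover_seat_taken matching dom moved.
by case: (under k).
Qed.

End DeferredAcceptance.

Theorem proposition2 (I S : finType) (P : problem I S) (i : I) :
  (least_preferred P i (DA P i) /\ (exists s : S, under_demanded P s))
  \/ DA P i = null_school P ->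
  unimprovable P i.
Proof.
move=> hyp; apply: under_demanded_unimprovable.
case: hyp => [[least [s under]] | ->]; last exact: null_school_under_demanded.
have [<- // | neq] := eqVneq s (DA P i).
by case: (under i (least s neq)).
Qed.
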